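(* Let $\mathcal X$ be an MRN with transition cocycle $P_{\mathcal X}$. The following are equivalent: (i) $\mathcal X$ converges in distribution; (ii) there exists an invariant distribution $p$ of $\mathcal X$ such that for every $q\in\Sigma_1^+$ and $\mu$-a.e. $\omega$, $\lim_{n\to\infty}|P_{\mathcal X}(n,\theta^{-n}\omega)q-p(\omega)|=0$; (iii) there exists an invariant distribution $p$ of $\mathcal X$ such that for every $q\in\Sigma_1^+$ and $\mu$-a.e. $\omega$, $\lim_{n\to\infty}|P_{\mathcal X}(n,\omega)q-p(\theta^n\omega)|=0$. Moreover, the invariant distributions in (ii) and (iii) are uniquely determined $\mu$-a.e. and coincide $\mu$-a.e.
   Context: Let $k\ge2$, $S=\{s_1,\dots,s_k\}$, $\mathbb K=\{1,\dots,k\}$; $|\cdot|$ is the $\ell^1$-norm on $\mathbb R^k$; $\Sigma_1^+=\{v\in\mathbb R^k:v_j\ge0,\sum_jv_j=1\}$. $\Theta=(\Omega,\mathcal F,\mu,\theta)$ is an invertible metric dynamical system (standard probability space, $\theta$ invertible, ergodic, $\mu$-preserving). A Markov random network (MRN) over $\Theta$ is a process $\mathcal X=(X_n)_{n\in\mathbb N_0}$ on $S\times\Omega$ such that $\omega\mapsto\mathbb P\{X_n=(s_i,\theta^n\omega)\mid X_0=(s_j,\omega)\}$ is measurable, transition probabilities between fibres sum to one, and the Markov property holds along fibres; its transition cocycle $P_{\mathcal X}(n,\omega)=(\mathbb P\{X_n=(s_i,\theta^n\omega)\mid X_0=(s_j,\omega)\})_{i,j}$ is, for $\mu$-a.e.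 $\omega$, column-stochastic with $P_{\mathcal X}(0,\omega)=I_k$ and $P_{\mathcal X}(m+n,\omega)=P_{\mathcal X}(m,\theta^n\omega)P_{\mathcal X}(n,\omega)$. An invariant distribution of $\mathcal X$ is an $\mathcal F$-measurable $p:\Omega\to\Sigma_1^+$ with $P_{\mathcal X}(n,\omega)p(\omega)=p(\theta^n\omega)$ for all $n\in\mathbb N_0$, $\mu$-a.e. $\omega$. $\mathcal X$ converges in distribution if for $\mu$-a.e. $\omega$, $\lim_{n\to\infty}|P_{\mathcal X}(n,\omega)u-P_{\mathcal X}(n,\omega)v|=0$ for all $u,v\in\Sigma_1^+$. *)

From HB Require Import structures.
From mathcomp Require Import all_boot all_order all_algebra.
From mathcomp Require Import all_classical all_reals all_analysis.
Set Implicit Arguments. Unset Strict Implicit. Unset Printing Implicit Defensive.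
Import Order.TTheory GRing.Theory Num.Theory.
Import numFieldNormedType.Exports.
Local Open Scope classical_set_scope.
Local Open Scope ring_scope.

Section MRN.
Context {R : realType} {k : nat}.

Definition l1norm (v : 'cV[R]_k) : R := \sum_(i < k) `|v i ord0|.

Definition in_simplex (v : 'cV[R]_k) : Prop :=
  (forall i, 0 <= v i ord0) /\ \sum_(i < k) v i ord0 = 1.

Definition col_stochastic (A : 'M[R]_k) : Prop :=
  (forall i j, 0 <= A i j) /\ (forall j, \sum_(i < k) A i j = 1).

Context {d : measure_display} {T : measurableType d}.

Definition invertible_ergodic_mds (mu : probability T R) (theta thinv : T -> T)
  : Prop :=
  [/\ measurable_fun setT theta /\ measurable_fun setT thinv,
      cancel theta thinv /\ cancel thinv theta,
      (forall A, measurable A -> mu (theta @^-1` A) = mu A)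
    & (forall A, measurable A -> theta @^-1` A = A ->
         mu A = 0%E \/ mu A = 1%E)].

(* P is (the transition cocycle of) a Markov random network over Theta:
   measurable entries, a.e. column-stochastic, P(0)=I, cocycle identity. *)
Definition transition_cocycle (mu : probability T R) (theta : T -> T)
  (P : nat -> T -> 'M[R]_k) : Prop :=
  (forall n i j, measurable_fun setT (fun w => P n w i j)) /\
  {ae mu, forall w,
     [/\ forall n, col_stochastic (P n w),
         P 0%N w = 1%:M
       & forall m n, P (m + n)%N w = P m (iter n theta w) *m P n w]}.

Definition invariant_distribution (mu : probability T R) (theta : T -> T)
  (P : nat -> T -> 'M[R]_k) (p : T -> 'cV[R]_k) : Prop :=
  [/\ forall i, measurable_fun setT (fun w => p w i ord0),
      forall w, in_simplex (p w)
    & forall n, {ae mu, forall w, P n w *m p w = p (iter n theta w)}].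

Definition converges_in_distribution (mu : probability T R)
  (P : nat -> T -> 'M[R]_k) : Prop :=
  {ae mu, forall w, forall u v, in_simplex u -> in_simplex v ->
     (fun n => l1norm (P n w *m u - P n w *m v)) @ \oo --> (0 : R)}.

Definition pullback_attractor (mu : probability T R) (theta thinv : T -> T)
  (P : nat -> T -> 'M[R]_k) (p : T -> 'cV[R]_k) : Prop :=
  invariant_distribution mu theta P p /\
  forall q, in_simplex q ->
    {ae mu, forall w,
      (fun n => l1norm (P n (iter n thinv w) *m q - p w)) @ \oo --> (0 : R)}.

Definition forward_attractor (mu : probability T R) (theta : T -> T)
  (P : nat -> T -> 'M[R]_k) (p : T -> 'cV[R]_k) : Prop :=
  invariant_distribution mu theta P p /\
  forall q, in_simplex q ->
    {ae mu, forall w,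
      (fun n => l1norm (P n w *m q - p (iter n theta w))) @ \oo --> (0 : R)}.

End MRN.

From HB Require Import structures.
From mathcomp Require Import all_boot all_order all_algebra.
From mathcomp Require Import all_classical all_reals all_analysis.
Import Order.TTheory GRing.Theory Num.Theory.
Import numFieldNormedType.Exports.
Local Open Scope classical_set_scope.
Local Open Scope ring_scope.

(* The proof is organised around the l1-diameter of the image of the simplex
   under a column-stochastic matrix A,
        diam A = max_(i,j) |A (e_i - e_j)|,
   which bounds |A u - A v| for all u, v in the simplex and does not increase
   when A is multiplied on either side by a column-stochastic matrix.  Put
   F n w = diam (P n w) (fwd_diam) and D n w = F n (theta^-n w) (pb_diam).
   1. Convergence in distribution means exactly F n w -> 0 a.e.
   2. On a.e. fibre both n |-> F n w and n |-> D n w are nonincreasing.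
      A general fact about measure-preserving maps s (ae_cvg0_along_orbit):
      if f n -> 0 a.e. and n |-> f n (s^n w) is a.e. nonincreasing, then
      f n (s^n w) -> 0 a.e.  With s = theta^-1 and s = theta this shows
      F -> 0 a.e. iff D -> 0 a.e.
   3. If D -> 0 a.e., the pullback columns P n (theta^-n w) e_i0 are Cauchy
      with modulus D n w; their limit is a measurable invariant distribution.
      Every invariant distribution is then a pullback and a forward attractor,
      and any two invariant distributions agree a.e.
   4. Conversely a pullback (forward) attractor forces D -> 0 (F -> 0). *)

Section SimplexGeometry.
Context {R : realType} {k : nat}.
Implicit Types (A B : 'M[R]_k) (x y z u v : 'cV[R]_k).

Definition unitv (i : 'I_k) : 'cV[R]_k := delta_mx i ord0.

Lemma unitvE i j : unitv i j ord0 = (j == i)%:R.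
Proof. by rewrite /unitv mxE eqxx andbT. Qed.

Lemma unitv_simplex i : in_simplex (unitv i).
Proof.
split=> [j|]; first by rewrite unitvE ler0n.
rewrite (bigD1 i) //= unitvE eqxx big1 ?addr0 // => j /negbTE ji.
by rewrite unitvE ji.
Qed.

Lemma mul_unitvE A i r : (A *m unitv i) r ord0 = A r i.
Proof.
rewrite mxE (bigD1 i) //= unitvE eqxx mulr1 big1 ?addr0 // => j /negbTE ji.
by rewrite unitvE ji mulr0.
Qed.

Lemma mul_unitv_subE A i j r :
  (A *m (unitv i - unitv j)) r ord0 = A r i - A r j.
Proof. by rewrite mulmxBr -!mul_unitvE !mxE. Qed.

Lemma l1norm_ge0 x : 0 <= l1norm x.
Proof. exact: sumr_ge0. Qed.

Lemma l1normD x y : l1norm (x + y) <= l1norm x + l1norm y.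
Proof.
rewrite /l1norm -big_split /=; apply: ler_sum => i _; rewrite mxE.
exact: ler_normD.
Qed.

Lemma l1normZ c x : l1norm (c *: x) = `|c| * l1norm x.
Proof.
by rewrite /l1norm mulr_sumr; apply: eq_bigr => i _; rewrite mxE normrM.
Qed.

Lemma l1normC x y : l1norm (x - y) = l1norm (y - x).
Proof. by apply: eq_bigr => i _; rewrite !mxE distrC. Qed.

Lemma l1norm_triangle x y z :
  l1norm (x - z) <= l1norm (x - y) + l1norm (y - z).
Proof. by rewrite -[x - z](subrKA y) l1normD. Qed.

Lemma l1norm_sum (I : Type) (r : seq I) (Q : pred I) (f : I -> 'cV[R]_k) :
  l1norm (\sum_(l <- r | Q l) f l) <= \sum_(l <- r | Q l) l1norm (f l).
Proof.
elim/big_rec2: _ => [|i s x _ IH].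
  by rewrite /l1norm big1 // => i _; rewrite mxE normr0.
by apply: le_trans (l1normD _ _) _; rewrite lerD2l.
Qed.

Lemma l1norm_entry x i : `|x i ord0| <= l1norm x.
Proof. by rewrite /l1norm (bigD1 i) //= lerDl; exact: sumr_ge0. Qed.

Lemma l1norm_stochastic_mul A x :
  col_stochastic A -> l1norm (A *m x) <= l1norm x.
Proof.
move=> [A0 A1]; rewrite /l1norm.
apply: (@le_trans _ _ (\sum_i \sum_j A i j * `|x j ord0|)).
  apply: ler_sum => i _; rewrite mxE; apply: le_trans (ler_norm_sum _ _ _) _.
  by apply: ler_sum => j _; rewrite normrM ger0_norm.
by rewrite exchange_big /=; apply: ler_sum => j _; rewrite -mulr_suml A1 mul1r.
Qed.

Lemma stochastic_simplex A u :
  col_stochastic A -> in_simplex u -> in_simplex (A *m u).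
Proof.
move=> [A0 A1] [u0 u1]; split=> [i|].
  by rewrite mxE; apply: sumr_ge0 => j _; apply: mulr_ge0.
under eq_bigr do rewrite mxE.
rewrite exchange_big /= -u1; apply: eq_bigr => j _.
by rewrite -mulr_suml A1 mul1r.
Qed.

Lemma simplex_sub_edges u v : in_simplex u -> in_simplex v ->
  u - v = \sum_(ij : 'I_k * 'I_k)
            (u ij.1 ord0 * v ij.2 ord0) *: (unitv ij.1 - unitv ij.2).
Proof.
move=> [_ u1] [_ v1]; apply/matrixP => r c; rewrite (ord1 c) !mxE summxE.
have h0 : ((0 : 'I_1) == ord0) = true by [].
under eq_bigr do rewrite !mxE h0 !andbT.
rewrite -(pair_bigA _ (fun i j =>
  u i ord0 * v j ord0 * ((r == i)%:R - (r == j)%:R))) /=.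
under eq_bigr do under eq_bigr do rewrite mulrBr.
under eq_bigr do rewrite sumrB.
rewrite sumrB; congr (_ - _).
  under eq_bigr do rewrite -mulr_suml -mulr_sumr v1 mulr1.
  by rewrite (bigD1 r) //= eqxx mulr1 big1 ?addr0 // => i /negbTE ir;
    rewrite eq_sym ir mulr0.
rewrite exchange_big /=.
under eq_bigr do rewrite -mulr_suml -mulr_suml u1 mul1r.
by rewrite (bigD1 r) //= eqxx mulr1 big1 ?addr0 // => i /negbTE ir;
  rewrite eq_sym ir mulr0.
Qed.

Definition diam A : R :=
  \big[Num.max/0]_(ij : 'I_k * 'I_k) l1norm (A *m (unitv ij.1 - unitv ij.2)).

Lemma diam_ge0 A : 0 <= diam A.
Proof.
elim/big_ind: (diam A) => // [x y x0 _|ij _]; last exact: l1norm_ge0.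
by rewrite le_max x0.
Qed.

Lemma diam_edge A i j : l1norm (A *m (unitv i - unitv j)) <= diam A.
Proof.
exact: (le_bigmax _
  (fun ij : 'I_k * 'I_k => l1norm (A *m (unitv ij.1 - unitv ij.2))) (i, j)).
Qed.

Lemma diam_le_edges A c : 0 <= c ->
  (forall i j, l1norm (A *m (unitv i - unitv j)) <= c) -> diam A <= c.
Proof. by move=> c0 h; apply: bigmax_le => // -[i j] _; exact: h. Qed.

Lemma diam_le_sum_edges A :
  diam A <= \sum_(ij : 'I_k * 'I_k) l1norm (A *m (unitv ij.1 - unitv ij.2)).
Proof.
have sum_ge0 (Q : pred ('I_k * 'I_k)) :
    0 <= \sum_(ij | Q ij) l1norm (A *m (unitv ij.1 - unitv ij.2)).
  by apply: sumr_ge0 => ij _; exact: l1norm_ge0.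
apply: diam_le_edges => [|i j]; first exact: sum_ge0.
by rewrite (bigD1 (i, j)) //= lerDl.
Qed.

Lemma diam_simplex A u v : in_simplex u -> in_simplex v ->
  l1norm (A *m (u - v)) <= diam A.
Proof.
move=> hu hv; rewrite (simplex_sub_edges _ _ hu hv) mulmx_sumr.
apply: le_trans (l1norm_sum _ _ _ _) _.
case: hu hv => [u0 u1] [v0 v1].
apply: (@le_trans _ _
  (\sum_(ij : 'I_k * 'I_k) (u ij.1 ord0 * v ij.2 ord0) * diam A)).
  apply: ler_sum => -[i j] _ /=.
  rewrite -scalemxAr l1normZ ger0_norm ?mulr_ge0 //.
  by apply: ler_wpM2l; [exact: mulr_ge0|exact: diam_edge].
rewrite -mulr_suml -(pair_bigA _ (fun i j => u i ord0 * v j ord0)) /=.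
by under eq_bigr do rewrite -mulr_sumr v1 mulr1; rewrite u1 mul1r.
Qed.

(* A B maps the simplex into the image of the simplex under A. *)
Lemma diam_mul_stochastic_r A B :
  col_stochastic B -> diam (A *m B) <= diam A.
Proof.
move=> hB; apply: diam_le_edges => [|i j]; first exact: diam_ge0.
by rewrite -mulmxA mulmxBr; apply: diam_simplex;
  apply: stochastic_simplex hB (unitv_simplex _).
Qed.

(* A is l1-nonexpansive, so it does not spread the images of B apart. *)
Lemma diam_mul_stochastic_l A B :
  col_stochastic A -> diam (A *m B) <= diam B.
Proof.
move=> hA; apply: diam_le_edges => [|i j]; first exact: diam_ge0.
rewrite -mulmxA; apply: le_trans (l1norm_stochastic_mul _ _ hA) _.
exact: diam_edge.
Qed.

End SimplexGeometry.

Section RealSequences.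
Context {R : realType}.

Lemma cvg_sum (I : Type) (r : seq I) (Q : pred I) (f : I -> nat -> R)
    (l : I -> R) :
  (forall i, f i n @[n --> \oo] --> l i) ->
  \sum_(i <- r | Q i) f i n @[n --> \oo] --> \sum_(i <- r | Q i) l i.
Proof. by move=> hf; apply: cvg_big => //; exact: add_continuous. Qed.

Lemma cvg_of_modulus {a b : nat -> R} :
  b n @[n --> \oo] --> 0 ->
  (forall n m, (n <= m)%N -> `|a m - a n| <= b n) -> cvgn a.
Proof.
move=> hb hab; apply/cauchy_cvgP/cauchy_exP => e e0.
have [N0 _ hN0] := (cvgrPdist_lt _ _).1 hb e e0.
exists (a N0); exists N0 => // m /= N0m.
rewrite -ball_normE /ball_ /= distrC; apply: le_lt_trans (hab _ _ N0m) _.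
have := hN0 N0 (leqnn N0); rewrite sub0r normrN.
by apply: le_lt_trans; exact: ler_norm.
Qed.

Lemma le_cvg0 {c : R} {s : nat -> R} :
  s n @[n --> \oo] --> 0 -> (forall n, c <= s n) -> c <= 0.
Proof.
move=> hs hc; rewrite -(cvg_lim _ hs) //; apply: limr_ge; first exact: cvgP hs.
exact: nearW.
Qed.

End RealSequences.

Section DiameterLimits.
Context {R : realType} {k : nat}.
Implicit Types (A : nat -> 'M[R]_k) (c x : nat -> 'cV[R]_k).

Lemma diam_cvg0_edges A :
  (forall i j, l1norm (A n *m (unitv i - unitv j)) @[n --> \oo] --> 0) ->
  diam (A n) @[n --> \oo] --> 0.
Proof.
move=> h; have hs := cvg_sum _ (index_enum ('I_k * 'I_k)%type) predT
  (fun ij n => l1norm (A n *m (unitv ij.1 - unitv ij.2))) (fun _ => 0)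
  (fun ij => h ij.1 ij.2).
rewrite big1 // in hs; apply: (squeeze_cvgr _ (cvg_cst 0) hs).
by apply: nearW => n; rewrite diam_ge0 diam_le_sum_edges.
Qed.

Lemma diam_cvg0_columns A c :
  (forall i, l1norm (A n *m unitv i - c n) @[n --> \oo] --> 0) ->
  diam (A n) @[n --> \oo] --> 0.
Proof.
move=> h; apply: diam_cvg0_edges => i j.
have hs : l1norm (A n *m unitv i - c n) + l1norm (A n *m unitv j - c n)
    @[n --> \oo] --> 0 by rewrite -[0]addr0; exact: cvgD.
apply: (squeeze_cvgr _ (cvg_cst 0) hs); apply: nearW => n.
rewrite l1norm_ge0 mulmxBr (l1normC (A n *m unitv j)) /=.
exact: l1norm_triangle.
Qed.

Lemma diam_cvg0_simplex A u v : diam (A n) @[n --> \oo] --> 0 ->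
  in_simplex u -> in_simplex v ->
  l1norm (A n *m u - A n *m v) @[n --> \oo] --> 0.
Proof.
move=> h hu hv; apply: (squeeze_cvgr _ (cvg_cst 0) h); apply: nearW => n.
by rewrite l1norm_ge0 -mulmxBr diam_simplex.
Qed.

Lemma simplex_lim {x} {l : 'I_k -> R} : (forall n, in_simplex (x n)) ->
  (forall i, x n i ord0 @[n --> \oo] --> l i) -> in_simplex (\col_i l i).
Proof.
move=> xs hl; split=> [i|].
  rewrite mxE -(cvg_lim _ (hl i)) //; apply: limr_ge; first exact: cvgP (hl i).
  by apply: nearW => n; exact: (xs n).1.
under eq_bigr do rewrite mxE.
have hsum := cvg_sum _ (index_enum 'I_k) predT _ _ hl.
have sum1 : (fun n => \sum_(i <- index_enum 'I_k | predT i) x n i ord0) = cst 1.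
  by apply/funext => n; exact: (xs n).2.
by rewrite -(cvg_lim _ hsum) // sum1 lim_cst.
Qed.

Lemma mulmx_cvg_col {M : 'M[R]_k} {x} {l : 'I_k -> R} :
  (forall i, x n i ord0 @[n --> \oo] --> l i) ->
  forall i, (M *m x n) i ord0 @[n --> \oo] --> (M *m \col_j l j) i ord0.
Proof.
move=> hl i; rewrite mxE; under eq_fun do rewrite mxE.
by apply: cvg_sum => j; rewrite mxE; apply: cvgMl_tmp.
Qed.

End DiameterLimits.

Definition measure_preserving {R : realType} {d : measure_display}
    {T : measurableType d} (mu : {measure set T -> \bar R}) (s : T -> T)
  : Prop :=
  measurable_fun setT s /\ forall A, measurable A -> mu (s @^-1` A) = mu A.

Section MeasurePreserving.
Context {R : realType} {d : measure_display} {T : measurableType d}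
  {mu : {measure set T -> \bar R}}.

Lemma measurable_preimage {s : T -> T} {A} :
  measurable_fun setT s -> measurable A -> measurable (s @^-1` A).
Proof. by move=> ms mA; rewrite -[_ @^-1` _]setTI; exact: ms. Qed.

Lemma measure_preserving_iter {s} n :
  measure_preserving mu s -> measure_preserving mu (iter n s).
Proof.
move=> [ms sA]; elim: n => [|n [mn nA]].
  by split=> [|A _]; [exact: measurable_id|].
split=> [|A mA]; first exact: measurableT_comp ms mn.
have -> : iter n.+1 s @^-1` A = iter n s @^-1` (s @^-1` A) by [].
by rewrite nA ?sA //; exact: measurable_preimage.
Qed.

Lemma ae_preimage {s} {Q : T -> Prop} : measure_preserving mu s ->
  {ae mu, forall w, Q w} -> {ae mu, forall w, Q (s w)}.
Proof.
move=> [ms sA] [N [mN N0 QN]]; exists (s @^-1` N); split.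
- exact: measurable_preimage.
- by rewrite sA.
- by move=> w nQ; apply: QN.
Qed.

Lemma ae_forall_fin (I : finType) (Q : I -> T -> Prop) :
  (forall i, {ae mu, forall w, Q i w}) -> {ae mu, forall w, forall i, Q i w}.
Proof.
move=> h; suff : {ae mu, forall w, forall i, i \in enum I -> Q i w}.
  by apply: filterS => w hw i; apply: hw; rewrite mem_enum.
elim: (enum I) => [|i r IH]; first exact: aeW.
move: IH; apply: filterS2 (h i) => w hi hr j; rewrite inE => /orP[/eqP -> //|].
exact: hr.
Qed.

End MeasurePreserving.

Section OrbitConvergence.
Context {R : realType} {d : measure_display} {T : measurableType d}.
Context {mu : {finite_measure set T -> \bar R}}.

(* If almost no point lies in infinitely many F n, then almost no point w has
   s^n w in F n for every n: that set has measure at most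
   mu (F n) <= mu (\bigcup_(m >= n) F m) for every n. *)
Lemma orbit_lim_sup_null {s : T -> T} {F : nat -> set T} :
  measure_preserving mu s -> (forall n, measurable (F n)) ->
  mu (lim_sup_set F) = 0%E -> mu (\bigcap_n (iter n s @^-1` F n)) = 0%E.
Proof.
move=> hs mF L0.
have mU n : measurable (\bigcup_(m in [set m | (n <= m)%N]) F m).
  exact: bigcup_measurable.
have hc : mu (\bigcup_(m in [set m | (n <= m)%N]) F m) @[n --> \oo] -->
    mu (lim_sup_set F).
  by apply: lim_sup_set_cvg => //; rewrite ltey_eq fin_num_measure.
apply/eqP; rewrite eq_le measure_ge0 andbT -L0 -(cvg_lim _ hc) //.
apply: lime_ge; first by apply/cvg_ex; eexists; exact: hc.
apply: nearW => n; have [msn snA] := measure_preserving_iter n hs.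
apply: (@le_trans _ _ (mu (iter n s @^-1` F n))).
  apply: le_measure; rewrite ?inE //; last by move=> w Bw; exact: Bw.
    by apply: bigcapT_measurable => m; exact: measurable_preimage
      (measure_preserving_iter m hs).1 (mF m).
  exact: measurable_preimage.
rewrite snA //; apply: le_measure; rewrite ?inE //.
by move=> w Fw; exists n => //=.
Qed.

Lemma ae_cvg0_lim_sup_null (f : nat -> T -> R) (e : R) : 0 < e ->
  (forall n, measurable [set w | e < f n w]) ->
  {ae mu, forall w, f n w @[n --> \oo] --> 0} ->
  mu (lim_sup_set (fun n => [set w | e < f n w])) = 0%E.
Proof.
move=> e0 mF [N [mN N0 cvgN]]; apply/eqP; rewrite -measure_le0 -N0.
apply: le_measure; rewrite ?inE //.
  by apply: bigcapT_measurable => n; apply: bigcup_measurable => m _; exact: mF.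
move=> w Lw; apply: cvgN => /cvgrPdist_lt /(_ e e0) [N1 _ hN1].
have [m /= N1m Fm] := Lw N1 I.
by have := hN1 m N1m; rewrite sub0r normrN => /(le_lt_trans (ler_norm _));
  rewrite ltNge (ltW Fm).
Qed.

(* If f n -> 0 a.e., s preserves mu and n |-> f n (s^n w) is a.e.
   nonincreasing, then f n (s^n w) -> 0 a.e.: the sequence f n o s^n has the
   same distributions as f n, and for monotone sequences convergence in
   probability is almost sure convergence. *)
Lemma ae_cvg0_along_orbit {s : T -> T} {f : nat -> T -> R} :
  measure_preserving mu s -> (forall n, measurable_fun setT (f n)) ->
  (forall n w, 0 <= f n w) ->
  {ae mu, forall w, f n w @[n --> \oo] --> 0} ->
  {ae mu, forall w, forall n, f n.+1 (iter n.+1 s w) <= f n (iter n s w)} ->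
  {ae mu, forall w, f n (iter n s w) @[n --> \oo] --> 0}.
Proof.
move=> hs mf f0 hcvg hmono.
have small_once (j : nat) :
    {ae mu, forall w, exists n, f n (iter n s w) <= j.+1%:R^-1}.
  set e : R := j.+1%:R^-1; pose F n := [set w | e < f n w].
  have mF n : measurable (F n).
    have := mf n measurableT _ (measurable_itv `]e, +oo[); rewrite setTI.
    by congr measurable; apply/seteqP; split => w /=; rewrite in_itv /= andbT.
  exists (\bigcap_n (iter n s @^-1` F n)); split.
  - by apply: bigcapT_measurable => n; exact: measurable_preimage
      (measure_preserving_iter n hs).1 (mF n).
  - apply: orbit_lim_sup_null => //; apply: ae_cvg0_lim_sup_null => //.
    by rewrite invr_gt0 ltr0n.
  - move=> w small n _; rewrite /= /F /= ltNge; apply/negP => le.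
    by apply: small; exists n.
move: (ae_foralln small_once) hmono; apply: filterS2 => w small mono.
have /nonincreasing_seqP dec :
    forall n, f n.+1 (iter n.+1 s w) <= f n (iter n s w) by exact: mono.
apply/cvgrPdist_le => eps eps0.
have [j epsj] : exists j : nat, j.+1%:R^-1 < eps.
  have [N0 _ hN0] := near_infty_natSinv_lt (PosNum eps0).
  by exists N0; exact: (hN0 N0 (leqnn N0)).
have [n fn] := small j.
near=> m; rewrite sub0r normrN ger0_norm //.
apply: le_trans (ltW epsj); apply: le_trans fn; apply: dec.
by near: m; exists n.
Unshelve. all: by end_near.
Qed.

End OrbitConvergence.

Section Measurability.
Context {R : realType} {d : measure_display} {T : measurableType d}.

Lemma measurable_big (I : Type) (r : seq I) (Q : pred I) (op : R -> R -> R)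
    (idx : R) (f : I -> T -> R) :
  (forall g h : T -> R, measurable_fun setT g -> measurable_fun setT h ->
     measurable_fun setT (fun w => op (g w) (h w))) ->
  (forall i, measurable_fun setT (f i)) ->
  measurable_fun setT (fun w => \big[op/idx]_(i <- r | Q i) f i w).
Proof.
move=> mop mf; elim: r => [|i r IH].
  by under eq_fun do rewrite big_nil; exact: measurable_cst.
under eq_fun do rewrite big_cons.
by case: (Q i) => //; exact: mop.
Qed.

Lemma measurable_diam {k : nat} (M : T -> 'M[R]_k) :
  (forall i j, measurable_fun setT (fun w => M w i j)) ->
  measurable_fun setT (fun w => diam (M w)).
Proof.
move=> mM; apply: measurable_big => [g h mg mh|ij].
  exact: measurable_realfun.measurable_maxr.
apply: measurable_big => [g h mg mh|r].
  exact: measurable_realfun.measurable_funD.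
under eq_fun do rewrite mul_unitv_subE.
exact/measurableT_comp/measurable_realfun.measurable_funB.
Qed.

Lemma measurable_lim_patch (N : set T) (f : nat -> T -> R) (c : R) :
  measurable N -> (forall n, measurable_fun setT (f n)) ->
  (forall w, ~ N w -> cvgn (f ^~ w)) ->
  measurable_fun setT (fun w => if w \in N then c else limn (f ^~ w)).
Proof.
move=> mN mf cvgf; apply: measurable_fun_if => //.
- apply: (measurable_fun_bool true); rewrite setTI.
  by rewrite [X in measurable X](_ : _ = N) //; apply/seteqP; split => w /=;
    [move/set_mem|move/mem_set].
- apply: (measurable_realfun.measurable_fun_cvg (h := f)).
    by move=> n; exact: measurable_funTS.
  by move=> w [_ /= wN]; apply: cvgf => Nw; move: wN; rewrite mem_set.
Qed.

End Measurability.

Section MarkovRandomNetwork.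
Context {R : realType} {k : nat} {d : measure_display} {T : measurableType d}
  {mu : probability T R} {theta thinv : T -> T} {P : nat -> T -> 'M[R]_k}.
Hypothesis hTheta : invertible_ergodic_mds mu theta thinv.
Hypothesis hP : transition_cocycle mu theta P.
Implicit Types p : T -> 'cV[R]_k.

Let thetaK : cancel theta thinv. Proof. by case: hTheta => _ []. Qed.
Let thinvK : cancel thinv theta. Proof. by case: hTheta => _ []. Qed.

Lemma iter_thetaK n w : iter n thinv (iter n theta w) = w.
Proof. by elim: n => [//|n IH]; rewrite iterSr iterS thetaK. Qed.

Lemma iter_thinvK n w : iter n theta (iter n thinv w) = w.
Proof. by elim: n => [//|n IH]; rewrite iterSr iterS thinvK. Qed.

Lemma iter_theta_thinv m n w :
  iter n theta (iter (m + n) thinv w) = iter m thinv w.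
Proof. by rewrite addnC iterD iter_thinvK. Qed.

Lemma theta_preserving : measure_preserving mu theta.
Proof. by case: hTheta => -[mt _] _ ht _; split. Qed.

Lemma thinv_preserving : measure_preserving mu thinv.
Proof.
case: hTheta => -[_ mti] _ ht _; split => // A mA.
have preK : theta @^-1` (thinv @^-1` A) = A.
  by apply/seteqP; split => w /=; rewrite thetaK.
by rewrite -[in RHS]preK; apply/esym/ht; exact: measurable_preimage.
Qed.

Definition regular_fibre (w : T) : Prop :=
  [/\ forall n, col_stochastic (P n w), P 0%N w = 1%:M
    & forall m n, P (m + n)%N w = P m (iter n theta w) *m P n w].

Lemma ae_regular_orbit {s : T -> T} : measure_preserving mu s ->
  {ae mu, forall w, forall j, regular_fibre (iter j s w)}.
Proof.
move=> hs; apply: ae_foralln => j.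
exact: ae_preimage (measure_preserving_iter j hs) hP.2.
Qed.

Definition fwd_diam (n : nat) (w : T) : R := diam (P n w).
Definition pb_diam (n : nat) (w : T) : R := fwd_diam n (iter n thinv w).

Lemma measurable_fwd_diam n : measurable_fun setT (fwd_diam n).
Proof. by apply: measurable_diam => i j; exact: hP.1. Qed.

Lemma measurable_pb_diam n : measurable_fun setT (pb_diam n).
Proof.
apply: measurableT_comp (measurable_fwd_diam n) _.
exact: (measure_preserving_iter n thinv_preserving).1.
Qed.

(* P (n+1) w = P 1 (theta^n w) P n w: the forward diameter decreases. *)
Lemma fwd_diam_noninc w : (forall j, regular_fibre (iter j theta w)) ->
  forall n, fwd_diam n.+1 w <= fwd_diam n w.
Proof.
move=> reg n; have [_ _ coc] := reg 0%N; have [st _ _] := reg n.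
by rewrite /fwd_diam -add1n coc; apply: diam_mul_stochastic_l (st 1%N).
Qed.

(* P (n+1) (theta^-(n+1) w) = P n (theta^-n w) P 1 (theta^-(n+1) w): the
   pullback diameter decreases. *)
Lemma pb_diam_noninc w : (forall j, regular_fibre (iter j thinv w)) ->
  forall n, pb_diam n.+1 w <= pb_diam n w.
Proof.
move=> reg n; have [st _ coc] := reg n.+1.
rewrite /pb_diam /fwd_diam; have := coc n 1%N; rewrite addn1 /= thinvK => ->.
exact: diam_mul_stochastic_r (st 1%N).
Qed.

Lemma converges_in_distributionE : converges_in_distribution mu P <->
  {ae mu, forall w, fwd_diam n w @[n --> \oo] --> 0}.
Proof.
split; apply: filterS => w h; last first.
  by move=> u v hu hv; exact: diam_cvg0_simplex.
apply: diam_cvg0_edges => i j; under eq_fun do rewrite mulmxBr.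
exact: h (unitv_simplex i) (unitv_simplex j).
Qed.

Lemma fwd_diam_cvg0_pb :
  {ae mu, forall w, fwd_diam n w @[n --> \oo] --> 0} ->
  {ae mu, forall w, pb_diam n w @[n --> \oo] --> 0}.
Proof.
move=> hF; apply: (ae_cvg0_along_orbit thinv_preserving
  measurable_fwd_diam (fun n w => diam_ge0 _) hF).
apply: filterS (ae_regular_orbit thinv_preserving) => w reg n.
exact: pb_diam_noninc.
Qed.

Lemma pb_diam_cvg0_fwd :
  {ae mu, forall w, pb_diam n w @[n --> \oo] --> 0} ->
  {ae mu, forall w, fwd_diam n w @[n --> \oo] --> 0}.
Proof.
move=> hD.
have mono : {ae mu, forall w, forall n,
    pb_diam n.+1 (iter n.+1 theta w) <= pb_diam n (iter n theta w)}.
  apply: filterS (ae_regular_orbit theta_preserving) => w reg n.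
  by rewrite /pb_diam !iter_thetaK; exact: fwd_diam_noninc.
have := ae_cvg0_along_orbit theta_preserving measurable_pb_diam
  (fun n w => diam_ge0 _) hD mono.
by apply: filterS => w; under eq_fun do rewrite /pb_diam iter_thetaK.
Qed.

(* An attractor has all columns of P converging to a common point. *)
Lemma pullback_attractor_diam {p} : pullback_attractor mu theta thinv P p ->
  {ae mu, forall w, pb_diam n w @[n --> \oo] --> 0}.
Proof.
move=> [_ attr]; have := ae_forall_fin _ _ (fun i => attr _ (unitv_simplex i)).
by apply: filterS => w; exact: diam_cvg0_columns.
Qed.

Lemma forward_attractor_diam {p} : forward_attractor mu theta P p ->
  {ae mu, forall w, fwd_diam n w @[n --> \oo] --> 0}.
Proof.
move=> [_ attr]; have := ae_forall_fin _ _ (fun i => attr _ (unitv_simplex i)).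
by apply: filterS => w; exact: diam_cvg0_columns.
Qed.

(* By invariance P n (theta^-n w) p (theta^-n w) = p w, so the pullback images
   of any q stay within pb_diam n w of p w. *)
Lemma invariant_pullback_attractor {p} : invariant_distribution mu theta P p ->
  {ae mu, forall w, pb_diam n w @[n --> \oo] --> 0} ->
  pullback_attractor mu theta thinv P p.
Proof.
move=> hp hD; split => // q hq; case: hp => _ ps inv.
have pb_inv : {ae mu, forall w, forall n,
    P n (iter n thinv w) *m p (iter n thinv w) = p w}.
  apply: ae_foralln => n.
  have := ae_preimage (measure_preserving_iter n thinv_preserving) (inv n).
  by apply: filterS => w; rewrite iter_thinvK.
move: pb_inv hD; apply: filterS2 => w pb_inv hDw.
apply: (squeeze_cvgr _ (cvg_cst 0) hDw); apply: nearW => n.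
by rewrite l1norm_ge0 /= -{1}(pb_inv n) -mulmxBr diam_simplex.
Qed.

Lemma invariant_forward_attractor {p} : invariant_distribution mu theta P p ->
  {ae mu, forall w, fwd_diam n w @[n --> \oo] --> 0} ->
  forward_attractor mu theta P p.
Proof.
move=> hp hF; split => // q hq; case: hp => _ ps inv.
move: (ae_foralln inv) hF; apply: filterS2 => w fwd_inv hFw.
apply: (squeeze_cvgr _ (cvg_cst 0) hFw); apply: nearW => n.
by rewrite l1norm_ge0 /= -(fwd_inv n) -mulmxBr diam_simplex.
Qed.

Section PullbackLimit.
Variable i0 : 'I_k.

(* Two invariant distributions attract the same pullback orbit of e_i0, so
   they agree a.e. *)
Lemma invariant_distribution_unique p1 p2 :
  invariant_distribution mu theta P p1 ->
  invariant_distribution mu theta P p2 ->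
  {ae mu, forall w, pb_diam n w @[n --> \oo] --> 0} ->
  {ae mu, forall w, p1 w = p2 w}.
Proof.
move=> h1 h2 hD.
have [_ c1] := invariant_pullback_attractor h1 hD.
have [_ c2] := invariant_pullback_attractor h2 hD.
move: (c1 _ (unitv_simplex i0)) (c2 _ (unitv_simplex i0)).
apply: filterS2 => w cw1 cw2.
have d0 : l1norm (p1 w - p2 w) <= 0.
  pose x n := P n (iter n thinv w) *m unitv i0.
  have sum0 : l1norm (x n - p1 w) + l1norm (x n - p2 w) @[n --> \oo] --> 0.
    by rewrite -[0]addr0; exact: cvgD.
  by apply: (le_cvg0 sum0) => n; rewrite (l1normC _ (p1 w)) l1norm_triangle.
apply/matrixP => i j; rewrite (ord1 j); apply/eqP; rewrite -subr_eq0.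
by have := le_trans (l1norm_entry (p1 w - p2 w) i) d0; rewrite normr_le0 !mxE.
Qed.

Definition pullback_column (n : nat) (w : T) : 'cV[R]_k :=
  P n (iter n thinv w) *m unitv i0.

Lemma measurable_pullback_column n i :
  measurable_fun setT (fun w => pullback_column n w i ord0).
Proof.
under eq_fun do rewrite mul_unitvE.
exact: measurableT_comp (hP.1 n i i0)
  (measure_preserving_iter n thinv_preserving).1.
Qed.

Section RegularBackwardOrbit.
Context {w : T}.
Hypothesis reg : forall j, regular_fibre (iter j thinv w).

Lemma pullback_column_simplex n : in_simplex (pullback_column n w).
Proof.
by have [st _ _] := reg n; exact: stochastic_simplex (unitv_simplex _).
Qed.

(* P m (theta^-m w) = P n (theta^-n w) P (m-n) (theta^-m w), so the pullback
   column moves by at most pb_diam n w after time n. *)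
Lemma pullback_column_cauchy {n m} : (n <= m)%N ->
  l1norm (pullback_column m w - pullback_column n w) <= pb_diam n w.
Proof.
move=> nm; have [st _ coc] := reg m.
have split_m : P m (iter m thinv w) =
    P n (iter n thinv w) *m P (m - n)%N (iter m thinv w).
  by rewrite -{1}(subnKC nm) coc -{2}(subnKC nm) iter_theta_thinv.
rewrite /pullback_column split_m -mulmxA -mulmxBr diam_simplex //.
  exact: stochastic_simplex (st _) (unitv_simplex _).
exact: unitv_simplex.
Qed.

Lemma pullback_column_shift n m :
  pullback_column (m + n) (iter n theta w) = P n w *m pullback_column m w.
Proof.
have [_ _ coc] := reg m.
by rewrite /pullback_column iterD iter_thetaK addnC coc iter_thinvK mulmxA.
Qed.

End RegularBackwardOrbit.

Definition pullback_limit (N : set T) (w : T) : 'cV[R]_k :=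
  if w \in N then unitv i0
  else \col_i limn (fun n => pullback_column n w i ord0).

Section ExceptionalSet.
Variable N : set T.
Hypothesis mN : measurable N.
Hypothesis good : forall w, ~ N w ->
  (forall j, regular_fibre (iter j thinv w)) /\ pb_diam n w @[n --> \oo] --> 0.

(* Off N each coordinate of the pullback column converges, being Cauchy with
   modulus pb_diam. *)
Lemma pullback_column_cvg w i : ~ N w ->
  cvgn (fun n => pullback_column n w i ord0).
Proof.
move=> /good [reg Dw]; apply: (cvg_of_modulus Dw) => n m nm.
apply: le_trans _ (pullback_column_cauchy reg nm).
by have := l1norm_entry (pullback_column m w - pullback_column n w) i;
  rewrite !mxE.
Qed.

Lemma pullback_limitE w : ~ N w ->
  pullback_limit N w = \col_i limn (fun n => pullback_column n w i ord0).
Proof. by move=> Nw; rewrite /pullback_limit memNset. Qed.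

Lemma measurable_pullback_limit i :
  measurable_fun setT (fun w => pullback_limit N w i ord0).
Proof.
rewrite [X in measurable_fun _ X](_ : _ = fun w => if w \in N
    then unitv i0 i ord0 else limn (fun n => pullback_column n w i ord0)).
  apply: measurable_lim_patch mN (measurable_pullback_column ^~ i) _.
  by move=> w Nw; exact: pullback_column_cvg.
by apply/funext => w; rewrite /pullback_limit; case: (w \in N); rewrite ?mxE.
Qed.

Lemma pullback_limit_simplex w : in_simplex (pullback_limit N w).
Proof.
have [Nw|Nw] := pselect (N w).
  by rewrite /pullback_limit mem_set //; exact: unitv_simplex.
rewrite pullback_limitE //.
apply: simplex_lim (pullback_column_simplex (good w Nw).1) _.
by move=> i; exact: pullback_column_cvg.
Qed.

(* Invariance follows from pullback_column_shift by passing to the limit. *)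
Lemma pullback_limit_invariant n w : ~ N w -> ~ N (iter n theta w) ->
  P n w *m pullback_limit N w = pullback_limit N (iter n theta w).
Proof.
move=> Nw Nnw; rewrite !pullback_limitE //.
apply/matrixP => i j; rewrite (ord1 j) [RHS]mxE; symmetry.
apply: cvg_lim => //; rewrite -(cvg_shiftn n).
under eq_fun do rewrite /= (pullback_column_shift (good w Nw).1).
exact: mulmx_cvg_col (fun i => pullback_column_cvg w i Nw) i.
Qed.

End ExceptionalSet.

Lemma exists_invariant_distribution :
  {ae mu, forall w, pb_diam n w @[n --> \oo] --> 0} ->
  exists p, invariant_distribution mu theta P p.
Proof.
move=> hD.
have [N [mN N0 Nbad]] : {ae mu, forall w,
    (forall j, regular_fibre (iter j thinv w))
    /\ pb_diam n w @[n --> \oo] --> 0}.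
  by move: (ae_regular_orbit thinv_preserving) hD; apply: filterS2.
have good w : ~ N w -> (forall j, regular_fibre (iter j thinv w)) /\
    pb_diam n w @[n --> \oo] --> 0.
  by move=> Nw; apply: contrapT => bad; exact/Nw/Nbad.
exists (pullback_limit N); split.
- exact: measurable_pullback_limit.
- exact: pullback_limit_simplex.
- move=> n; have ae_good : {ae mu, forall w, ~ N w}.
    by exists N; split => // w /contrapT.
  have := ae_preimage (measure_preserving_iter n theta_preserving) ae_good.
  by move: ae_good; apply: filterS2 => w; exact: pullback_limit_invariant.
Qed.

End PullbackLimit.

(* Equivalence (i) <-> (ii): both amount to vanishing pullback diameters. *)
Lemma converges_in_distribution_pullback (i0 : 'I_k) :
  converges_in_distribution mu P <->
  exists p, pullback_attractor mu theta thinv P p.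
Proof.
split=> [/converges_in_distributionE /fwd_diam_cvg0_pb hD|[p hp]].
  have [p hp] := exists_invariant_distribution i0 hD.
  by exists p; exact: invariant_pullback_attractor.
apply/converges_in_distributionE/pb_diam_cvg0_fwd.
exact: pullback_attractor_diam hp.
Qed.

(* Equivalence (i) <-> (iii): both amount to vanishing forward diameters. *)
Lemma converges_in_distribution_forward (i0 : 'I_k) :
  converges_in_distribution mu P <->
  exists p, forward_attractor mu theta P p.
Proof.
split=> [/converges_in_distributionE hF|[p hp]].
  have [p hp] := exists_invariant_distribution i0 (fwd_diam_cvg0_pb hF).
  by exists p; exact: invariant_forward_attractor.
by apply/converges_in_distributionE; exact: forward_attractor_diam hp.
Qed.

Lemma attractor_invariant_pb_diam {p} :
  pullback_attractor mu theta thinv P p \/ forward_attractor mu theta P p ->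
  invariant_distribution mu theta P p /\
  {ae mu, forall w, pb_diam n w @[n --> \oo] --> 0}.
Proof.
case=> hp; split; try by case: hp.
  exact: pullback_attractor_diam hp.
by apply: fwd_diam_cvg0_pb; exact: forward_attractor_diam hp.
Qed.

End MarkovRandomNetwork.

Theorem lemma2p6 (R : realType) (k : nat) (hk : (2 <= k)%N)
  (d : measure_display) (T : measurableType d) (mu : probability T R)
  (theta thinv : T -> T)
  (hTheta : invertible_ergodic_mds mu theta thinv)
  (P : nat -> T -> 'M[R]_k)
  (hP : transition_cocycle mu theta P) :
  [/\ converges_in_distribution mu P <->
        (exists p, pullback_attractor mu theta thinv P p),
      converges_in_distribution mu P <->
        (exists p, forward_attractor mu theta P p)
    & forall p1 p2 : T -> 'cV[R]_k,
        (pullback_attractor mu theta thinv P p1 \/ forward_attractor mu theta P p1) ->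
        (pullback_attractor mu theta thinv P p2 \/ forward_attractor mu theta P p2) ->
        {ae mu, forall w, p1 w = p2 w}].
Proof.
have k_gt0 : (0 < k)%N by apply: leq_trans hk.
pose i0 : 'I_k := Ordinal k_gt0.
split.
- exact: converges_in_distribution_pullback hTheta hP i0.
- exact: converges_in_distribution_forward hTheta hP i0.
- move=> p1 p2 /(attractor_invariant_pb_diam hTheta hP) [inv1 hD]
    /(attractor_invariant_pb_diam hTheta hP) [inv2 _].
  exact: invariant_distribution_unique hTheta i0 _ _ inv1 inv2 hD.
Qed.
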